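(* Let $1\le k<n$ and let $\{\mu_\alpha\}_{\alpha\in\mathcal{I}_{nk}}$ be a consistent family of probability measures, $\mu_\alpha\in\mathcal{P}(X_\alpha)$. For $\beta\subseteq\{1,\dots,n\}$ with $|\beta|\le k$ put $\mu_\beta=\mathrm{Pr}_\beta(\mu_\gamma)$ for any $\gamma\in\mathcal{I}_{nk}$ with $\gamma\supseteq\beta$ (well defined by consistency; $\mu_\varnothing$ is the unit mass on the one-point space). Let $\nu_i\in\mathcal{P}(X_i)$, $1\le i\le n$, be arbitrary probability measures. For $|\beta|\le k$ let $\widetilde{\mu}_\beta=\mu_\beta\otimes\bigotimes_{i\notin\beta}\nu_i$, viewed as a measure on $X$ via the identification $X\cong X_\beta\times\prod_{i\notin\beta}X_i$, and for $0\le t\le k$ let $\widetilde{\mu}_t=\sum_{\beta\in\mathcal{I}_{nt}}\widetilde{\mu}_\beta$. Then there exist real numbers $\lambda_0,\dots,\lambda_k$, depending only on $n$ and $k$ (and not on the family $\{\mu_\alpha\}$ nor on the $\nu_i$), such that the finite signed measure $\mu=\sum_{t=0}^k\lambda_t\widetilde{\mu}_t$ satisfies $\mathrm{Pr}_\alpha(\mu)=\mu_\alpha$ for all $\alpha\in\mathcal{I}_{nk}$.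
   Context: $X_1,\dots,X_n$ are Polish spaces with Borel $\sigma$-algebras, $X=\prod_{i=1}^nX_i$. $\mathcal{I}_{nq}$ denotes the family of subsets of $\{1,\dots,n\}$ of cardinality $q$. For $\alpha\subseteq\{1,\dots,n\}$, $X_\alpha=\prod_{i\in\alpha}X_i$, $\mathrm{Pr}_\alpha$ is the coordinate projection onto $X_\alpha$ (from $X$ or from any $X_\gamma$ with $\gamma\supseteq\alpha$), and $x_\alpha=\mathrm{Pr}_\alpha(x)$. $\mathcal{P}(Y)$ is the set of Borel probability measures on $Y$. A family $\{\mu_\alpha\}_{\alpha\in\mathcal{I}_{nk}}$, $\mu_\alpha\in\mathcal{P}(X_\alpha)$, is called consistent if $\mathrm{Pr}_{\alpha\cap\beta}(\mu_\alpha)=\mathrm{Pr}_{\alpha\cap\beta}(\mu_\beta)$ for all $\alpha,\beta\in\mathcal{I}_{nk}$. *)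

From HB Require Import structures.
From mathcomp Require Import all_boot all_order all_algebra.
From mathcomp Require Import all_classical all_reals all_analysis.

Set Implicit Arguments.
Unset Strict Implicit.
Unset Printing Implicit Defensive.
Import Order.TTheory GRing.Theory Num.Theory.
Local Open Scope classical_set_scope.
Local Open Scope ring_scope.

Definition separable_space (T : topologicalType) : Prop :=
  exists D : set T, countable D /\ closure D = setT.

Definition is_metric (R : realType) (T : Type) (d : T -> T -> R) : Prop :=
  (forall x y, 0 <= d x y) /\ (forall x y, d x y = 0 <-> x = y) /\
  (forall x y, d x y = d y x) /\ (forall x y z, d x z <= d x y + d y z).

Definition metric_generates (R : realType) (T : topologicalType)
  (d : T -> T -> R) : Prop :=
  forall A : set T, open A <->
    (forall x, A x -> exists2 e : R, 0 < e & [set y | d x y < e] `<=` A).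

Definition metric_complete (R : realType) (T : Type) (d : T -> T -> R) : Prop :=
  forall u : nat -> T,
    (forall e : R, 0 < e -> exists N, forall p q, (N <= p)%N -> (N <= q)%N ->
       d (u p) (u q) < e) ->
    exists x, forall e : R, 0 < e -> exists N, forall p, (N <= p)%N -> d (u p) x < e.

Definition polish (R : realType) (T : topologicalType) : Prop :=
  separable_space T /\
  exists d : T -> T -> R, [/\ is_metric d, metric_generates d & metric_complete d].

Section Products.
Variables (n : nat) (T : 'I_n -> ptopologicalType).

Definition Xi (i : 'I_n) := g_sigma_algebraType (@open (T i)).

Definition prodX (a : {set 'I_n}) := forall i : 'I_n, i \in a -> Xi i.

Section PointedProd.
Variable a : {set 'I_n}.
Definition prodX_point : prodX a := fun i _ => (point : T i).
HB.instance Definition _ := isPointed.Build (prodX a) prodX_point.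
End PointedProd.

Definition coord_gen (a : {set 'I_n}) : set (set (prodX a)) :=
  [set S | exists i (h : i \in a) (A : set (Xi i)),
      measurable A /\ S = [set x | A (x i h)]].

Definition PX (a : {set 'I_n}) := g_sigma_algebraType (@coord_gen a).

Definition restr (a b : {set 'I_n}) (sub : b \subset a) : PX a -> PX b :=
  fun x i h => x i ((elimT fintype.subsetP sub) i h).

Definition fullI : {set 'I_n} := finset.setTfor 'I_n.

Definition projX (a : {set 'I_n}) : PX fullI -> PX a :=
  @restr fullI a (finset.subsetT a).

End Products.

Definition consistent (R : realType) (n k : nat) (T : 'I_n -> ptopologicalType)
  (mu : forall a : {set 'I_n}, probability (PX T a) R) : Prop :=
  forall a b : {set 'I_n}, #|a| = k -> #|b| = k ->
  forall B : set (PX T (a :&: b)), measurable B ->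
    mu a (restr (subsetIl a b) @^-1` B) = mu b (restr (subsetIr a b) @^-1` B).

(* m is the product measure mu_beta \otimes \bigotimes_{i \notin beta} nu_i on X,
   where mu_beta = Pr_beta(mu_gamma) for any gamma in I_nk containing beta;
   characterized (uniquely) by its values on measurable rectangles. *)
Definition is_tilde_measure (R : realType) (n k : nat)
  (T : 'I_n -> ptopologicalType)
  (mu : forall a : {set 'I_n}, probability (PX T a) R)
  (nu : forall i : 'I_n, probability (Xi T i) R)
  (b : {set 'I_n}) (m : probability (PX T (fullI n)) R) : Prop :=
  forall g : {set 'I_n}, #|g| = k -> b \subset g ->
  forall A : forall i : 'I_n, set (Xi T i), (forall i, measurable (A i)) ->
    fine (m [set x : PX T (fullI n) | forall i (h : i \in fullI n), A i (x i h)]) =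
    fine (mu g [set y : PX T g | forall i (h : i \in g), i \in b -> A i (y i h)])
    * \prod_(i in ~: b) fine (nu i (A i)).

From HB Require Import structures.
From mathcomp Require Import all_boot all_order all_algebra.
From mathcomp Require Import all_classical all_reals all_analysis.
From mathcomp Require Import zify.

(* Pushed forward to X_alpha, the measure mu~_beta only depends on the trace
   beta :&: alpha: on a box it is mu_alpha of the constraints indexed by the
   trace times the nu_i-masses of the other coordinates of alpha.  Since
   exactly 'C(n - k, t - |c|) sets of size t have a given trace c, the
   combination sum_t lam_t mu~_t returns mu_alpha on boxes as soon as lam
   solves the unitriangular system sum_t lam_t 'C(n - k, t - j) = [j == k],
   j <= k.  Both sides are real sigma-additive set functions and boxes form a
   pi-system generating the product sigma-algebra, so Dynkin's lemma
   extends the equality to all measurable sets. *)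

Import Order.TTheory GRing.Theory Num.Theory.
Import numFieldNormedType.Exports.
Local Open Scope ring_scope.

Section Combinatorics.
(* Otherwise classical_sets shadows the finset lemma names. *)
Import mathcomp.boot.finset.

Lemma unitriangular_system_solvable {R : nzRingType} (k : nat)
    (A : nat -> nat -> R) (y : nat -> R) :
  (forall j, A j j = 1) ->
  exists l : nat -> R,
    forall j, (j <= k)%N -> \sum_(j <= t < k.+1) l t * A t j = y j.
Proof.
move=> A1.
(* back substitution, solving the equations for j = k, k - 1, ..., k - d *)
suff /(_ k) [l hl] : forall d, exists l : nat -> R,
    forall j, (k - d <= j <= k)%N -> \sum_(j <= t < k.+1) l t * A t j = y j.
  by exists l => j jk; apply: hl; lia.
elim=> [|d [l hl]].
  exists y => j /andP[kj jk]; have -> : j = k by lia.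
  by rewrite big_nat1 A1 mulr1.
set j0 := (k - d.+1)%N.
exists (fun t => if t == j0 then y j0 - \sum_(j0.+1 <= t < k.+1) l t * A t j0
                 else l t) => j /andP[j0j jk].
have [->|j0ltj] := eqVneq j j0.
  rewrite big_ltn ?ltnS ?leq_subr // eqxx A1 mulr1.
  under eq_big_nat => t /andP[j0t _] do rewrite gtn_eqF //.
  by rewrite subrK.
have j0j' : (j0 < j)%N by rewrite ltn_neqAle eq_sym j0ltj.
rewrite -(hl j); last by move: j0j' jk; rewrite /j0; lia.
by apply: eq_big_nat => t /andP[jt _]; rewrite gtn_eqF //; exact: leq_trans jt.
Qed.

Lemma card_trace_sets {T : finType} (a c : {set T}) (t : nat) :
  c \subset a ->
  #|[set b : {set T} | #|b| == t & b :&: a == c]| =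
    if (#|c| <= t)%N then 'C(#|~: a|, t - #|c|) else 0%N.
Proof.
move=> ca; case: ifP => ct; last first.
  apply: eq_card0 => b; rewrite !inE; apply/negP => /andP[/eqP bt /eqP bac].
  have := subset_leq_card (subsetIl b a); rewrite bac bt; lia.
have disj (d : {set T}) : d \subset ~: a -> [disjoint d & a].
  by rewrite disjoints_subset.
have setUDK (d : {set T}) : d \subset ~: a -> (d :|: c) :\: a = d.
  move=> /disj da; rewrite setDUl (setDidPl da).
  by rewrite (eqP (_ : c :\: a == set0)) ?setD_eq0 ?setU0.
rewrite -cards_draws -[RHS](card_in_imset (f := fun d => d :|: c)); last first.
  move=> d1 d2; rewrite !inE => /andP[d1a _] /andP[d2a _] e.
  by rewrite -(setUDK d1 d1a) -(setUDK d2 d2a) e.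
apply: eq_card => b; rewrite inE; apply/andP/imsetP.
- move=> [/eqP bt /eqP bac]; exists (b :\: a).
    by rewrite inE subDset setUCr subsetT cardsD bac bt eqxx.
  by rewrite -bac setUC setID.
- move=> [d]; rewrite inE => /andP[da /eqP dt] ->; split.
    rewrite cardsU disjoint_setI0 ?cards0 ?dt; first by apply/eqP; lia.
    exact: disjointWr ca (disj d da).
  by rewrite setIUl disjoint_setI0 ?disj // set0U (setIidPl ca).
Qed.

Lemma trace_sum_inversion {R : comNzRingType} {T : finType} (k : nat)
    (a : {set T}) (l : nat -> R) (H : {set T} -> R) :
  #|a| = k ->
  (forall j, (j <= k)%N ->
     \sum_(j <= t < k.+1) l t * 'C(#|~: a|, t - j)%:R = (j == k)%:R) ->
  \sum_(t < k.+1) l t * \sum_(b : {set T} | #|b| == t) H (b :&: a) = H a.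
Proof.
move=> ak hl.
have traceE (t : nat) : \sum_(b : {set T} | #|b| == t) H (b :&: a) =
    \sum_(c : {set T} | c \subset a)
      H c * (if (#|c| <= t)%N then 'C(#|~: a|, t - #|c|) else 0%N)%:R.
  rewrite (partition_big (fun b => b :&: a) (fun c => c \subset a)) => [|b _];
    last exact: subsetIr.
  apply: eq_bigr => c ca; rewrite -card_trace_sets // -sum1_card natr_sum.
  rewrite mulr_sumr; apply: eq_big => [b|b /andP[_ /eqP <-]]; last by rewrite mulr1.
  by rewrite inE.
have coefE (c : {set T}) : c \subset a -> \sum_(t < k.+1) l t *
    (H c * (if (#|c| <= t)%N then 'C(#|~: a|, t - #|c|) else 0%N)%:R) =
    H c * (#|c| == k)%:R.
  move=> ca; rewrite -hl -?ak ?subset_leq_card //.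
  rewrite big_geq_mkord mulr_sumr [RHS]big_mkcond.
  by apply: eq_bigr => t _ /=; case: ifP; rewrite ?mulr0 // mulrCA.
under eq_bigr do rewrite traceE mulr_sumr.
rewrite exchange_big (eq_bigr _ coefE) (bigD1 a) //= ak eqxx mulr1 big1 ?addr0 //.
move=> c /andP[ca ca']; have /proper_card : c \proper a by rewrite properEneq ca' ca.
by rewrite ak => /ltn_eqF ->; rewrite mulr0.
Qed.

Lemma exists_superset_card {T : finType} (b : {set T}) (k : nat) :
  (#|b| <= k <= #|T|)%N -> exists2 g : {set T}, #|g| = k & b \subset g.
Proof.
move=> /andP[bk kT].
have : (0 < #|[set d : {set T} | d \subset ~: b & #|d| == k - #|b|]|)%N.
  by rewrite cards_draws bin_gt0; have := cardsC b; lia.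
rewrite card_gt0 => /set0Pn[d]; rewrite inE => /andP[db /eqP dk].
exists (b :|: d); last exact: subsetUl.
rewrite cardsU disjoint_setI0 ?cards0 ?dk; first lia.
by rewrite disjoint_sym disjoints_subset.
Qed.

End Combinatorics.

Local Open Scope classical_set_scope.

Definition real_sigma_additive {d} {X : measurableType d} {R : realType}
    (L : set X -> R) :=
  forall F : (set X)^nat, (forall j, measurable (F j)) -> trivIset setT F ->
    (fun N => \sum_(j < N) L (F j)) @ \oo --> L (\bigcup_j F j).

Section RealSigmaAdditive.
Context {d : measure_display} {X : measurableType d} {R : realType}.
Implicit Types (L M : set X -> R).

Lemma fine_measure_sigma_additive (m : {finite_measure set X -> \bar R}) :
  real_sigma_additive (fine \o m).
Proof.
move=> F mF tF; have finm A : measurable A -> m A \is a fin_num.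
  exact: fin_num_measure.
have -> : (fun N => \sum_(j < N) (fine \o m) (F j)) =
    fine \o (fun N => \sum_(0 <= j < N) m (F j))%E.
  by apply/funext => N /=; rewrite -sum_fine ?big_mkord // => j _; exact: finm.
apply: fine_cvg; rewrite fineK ?finm //; last exact: bigcup_measurable.
exact: measure_sigma_additive.
Qed.

Lemma real_sigma_additive_scale (c : R) L :
  real_sigma_additive L -> real_sigma_additive (fun S => c * L S).
Proof.
move=> sL F mF tF; under eq_fun do rewrite -mulr_sumr.
exact: cvgM (cvg_cst c) (sL F mF tF).
Qed.

Lemma real_sigma_additive_sum (I : Type) (r : seq I) (P : pred I)
    (L : I -> set X -> R) :
  (forall i, P i -> real_sigma_additive (L i)) ->
  real_sigma_additive (fun S => \sum_(i <- r | P i) L i S).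
Proof.
move=> sL F mF tF /=; under eq_fun do rewrite exchange_big /=.
by apply: cvg_big => [|i /sL]; [exact: add_continuous | exact].
Qed.

Lemma real_sigma_additive_preimage {d'} {Y : measurableType d'} (f : Y -> X)
    (L : set Y -> R) :
  measurable_fun setT f -> real_sigma_additive L ->
  real_sigma_additive (fun S => L (f @^-1` S)).
Proof.
move=> mf sL F mF tF /=; rewrite preimage_bigcup; apply: sL.
  by move=> j; rewrite -[_ @^-1` _]setTI; exact: mf.
by move=> i j _ _ [y [Fiy Fjy]]; apply: tF => //; exists (f y).
Qed.

Lemma real_sigma_additive_set0 L : real_sigma_additive L -> L set0 = 0.
Proof.
move=> sL; set x := L set0.
have triv0 : trivIset [set: nat] (fun=> @set0 X) by move=> i j _ _ [y []].
have : (fun N : nat => x *+ N) @ \oo --> x.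
  have := sL (fun=> set0) (fun=> measurable0) triv0.
  by rewrite bigcup0 //; under eq_fun do rewrite sumr_const card_ord.
move=> cx; have : (fun N : nat => x *+ N.+1 - x *+ N) @ \oo --> x - x.
  by apply: cvgB => //; rewrite (cvg_shiftS (fun N => x *+ N)).
under eq_fun do rewrite mulrSr addrAC subrr add0r.
by rewrite subrr; exact: (cvg_unique _ (cvg_cst x)).
Qed.

Lemma real_sigma_additive_setU L (A B : set X) : real_sigma_additive L ->
  measurable A -> measurable B -> A `&` B = set0 -> L (A `|` B) = L A + L B.
Proof.
move=> sL mA mB AB0.
have m2 j : measurable (bigcup2 A B j) by case: j => [|[|j]] //=; exact: measurable0.
have partial2 N : \sum_(j < N.+2) L (bigcup2 A B j) = L A + L B.
  rewrite -(big_mkord xpredT (fun j => L (bigcup2 A B j))) big_ltn // big_ltn //.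
  rewrite big_nat_cond big1 ?addr0 // => -[|[|j]] //.
  by rewrite andbT => _; exact: real_sigma_additive_set0.
have : (fun N => \sum_(j < N + 2) L (bigcup2 A B j)) @ \oo --> L (A `|` B).
  rewrite (cvg_shiftn 2 (fun N => \sum_(j < N) L (bigcup2 A B j))) -bigcup2E.
  by apply: sL; rewrite // -trivIset_bigcup2.
under eq_fun do rewrite addn2 partial2.
by move=> h; exact: esym (cvg_unique _ (cvg_cst _) h).
Qed.

Lemma real_sigma_additive_setC L (S : set X) : real_sigma_additive L ->
  measurable S -> L (~` S) = L setT - L S.
Proof.
move=> sL mS; rewrite -(setUCr S) real_sigma_additive_setU ?setICr //.
  by rewrite addrAC subrr add0r.
exact: measurableC.
Qed.

Lemma real_sigma_additive_unique (G : set (set X)) L M :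
  @measurable _ X = <<s G >> -> setI_closed G -> G setT ->
  real_sigma_additive L -> real_sigma_additive M ->
  (forall S, G S -> L S = M S) -> forall S, measurable S -> L S = M S.
Proof.
move=> XG GI GT sL sM LMG S mS.
apply: (dynkin_induction XG GI (LMG _ GT) LMG); last by rewrite -XG.
  by move=> A mA LMA; rewrite !real_sigma_additive_setC // LMA LMG.
move=> F mF tF LMF; have := sM F mF tF.
under eq_fun do under eq_bigr do rewrite -LMF.
exact: cvg_unique (sL F mF tF).
Qed.

End RealSigmaAdditive.

Section Boxes.
Context {n : nat} {T : 'I_n -> ptopologicalType}.
Implicit Types (a b c : {set 'I_n}) (P Q : forall i, set (Xi T i)).

Definition box c P : set (PX T c) := [set y | forall i (h : i \in c), P i (y i h)].

Definition fam_on c P : forall i, set (Xi T i) :=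
  fun i => [set z | i \in c -> P i z].

Definition boxes c : set (set (PX T c)) :=
  box c @` [set P | forall i, measurable (P i)].

Lemma eq_box c P Q : (forall i, i \in c -> P i = Q i) -> box c P = box c Q.
Proof.
move=> PQ; apply/seteqP; split=> y yP i h; first by rewrite -PQ //; exact: yP.
by rewrite PQ //; exact: yP.
Qed.

Lemma fam_on_in c P i : i \in c -> fam_on c P i = P i.
Proof. by move=> ic; apply/seteqP; split=> z /= => [/(_ ic)|Pz _]. Qed.

Lemma fam_on_out c P i : i \notin c -> fam_on c P i = setT.
Proof. by move=> /negbTE ic; apply/seteqP; split=> z // _; rewrite /fam_on /= ic. Qed.

Lemma fam_on_measurable c {P} :
  (forall i, measurable (P i)) -> forall i, measurable (fam_on c P i).
Proof.
move=> mP i; have [ic|ic] := boolP (i \in c); first by rewrite fam_on_in.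
by rewrite fam_on_out.
Qed.

Lemma box_fam_on c P : box c (fam_on c P) = box c P.
Proof. by apply: eq_box => i; exact: fam_on_in. Qed.

Lemma fam_onI c b P : fam_on c (fam_on b P) = fam_on (c :&: b) P.
Proof.
apply: functional_extensionality_dep => i.
apply/seteqP; split=> z; rewrite /fam_on /= inE.
  by move=> cbP /andP[ic ib]; exact: cbP.
by move=> cbP ic ib; apply: cbP; rewrite ic.
Qed.

Lemma eq_box_fam_on c b b' P : {in c, b =i b'} ->
  box c (fam_on b P) = box c (fam_on b' P).
Proof.
move=> bb'; apply: eq_box => i ic.
by apply/seteqP; split=> z; rewrite /fam_on /= (bb' i ic).
Qed.

Lemma boxT c : box c (fun i => setT) = setT.
Proof. by apply/seteqP; split. Qed.

Lemma boxI c P Q : box c P `&` box c Q = box c (fun i => P i `&` Q i).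
Proof.
apply/seteqP; split=> [y [yP yQ] i h|y yPQ]; first by split; [exact: yP|exact: yQ].
by split=> i h; have [] := yPQ i h.
Qed.

Lemma preimage_restr_box a b (ba : b \subset a) P :
  restr ba @^-1` box b P = box a (fam_on b P).
Proof.
apply/seteqP; split=> y /= yP i h.
  by move=> ib; rewrite (Prop_irrelevance h (elimT fintype.subsetP ba i ib)); exact: yP.
by rewrite /restr; apply: yP.
Qed.

Lemma box_measurable c {P} : (forall i, measurable (P i)) -> measurable (box c P).
Proof.
move=> mP.
have -> : box c P = \bigcap_(i in setT) [set y | forall h : i \in c, P i (y i h)].
  by apply/seteqP; split=> [y yP i _ h|y yP i h]; [exact: yP|exact: yP].
apply: fin_bigcap_measurable => [|i _]; first exact: finite_finset.
have [ic|nic] := pselect (i \in c); last first.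
  rewrite (_ : [set y | _] = setT) //.
  by apply/seteqP; split=> // y _ h; case: (nic h).
rewrite (_ : [set y | _] = [set y | P i (y i ic)]).
  by apply: sub_sigma_algebra; exists i, ic, (P i).
by apply/seteqP; split=> [y /(_ ic)|y yP h] //; rewrite (Prop_irrelevance h ic).
Qed.

Lemma measurable_boxes c : @measurable _ (PX T c) = <<s boxes c >>.
Proof.
apply/seteqP; split; last first.
  apply: smallest_sub; first exact: sigma_algebra_measurable.
  by move=> _ [P mP <-]; exact: box_measurable.
apply: smallest_sub; first exact: smallest_sigma_algebra.
move=> _ [i [h [A [mA ->]]]]; apply: sub_sigma_algebra.
exists (@dfwith _ (fun j => set (Xi T j)) (fun j => setT) i A).
  by move=> j; case: dfwithP => //; exact: measurableT.
apply/seteqP; split=> y.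
  by move=> /(_ i h); rewrite /dfwith; case: eqP => // ii; rewrite eq_axiomK.
move=> Ay j hj; rewrite /dfwith; case: eqP => // ij; subst j.
by rewrite (Prop_irrelevance hj h).
Qed.

Lemma boxes_setI_closed c : setI_closed (boxes c).
Proof.
move=> _ _ [P mP <-] [Q mQ <-]; rewrite boxI.
by exists (fun i => P i `&` Q i) => // i; exact: measurableI.
Qed.

Lemma boxes_setT c : boxes c setT.
Proof. by exists (fun i => setT); rewrite ?boxT // => i; exact: measurableT. Qed.

Lemma measurable_restr a b (ba : b \subset a) : measurable_fun setT (restr (T := T) ba).
Proof.
apply: (measurability _ (measurable_boxes b)) => _ [_ [P mP <-] <-].
rewrite setTI preimage_restr_box.
by apply: box_measurable; exact: fam_on_measurable.
Qed.

End Boxes.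

Section TildeMeasures.
Context {R : realType} {n k : nat} {T : 'I_n -> ptopologicalType}.
Variables (mu : forall a : {set 'I_n}, probability (PX T a) R)
          (nu : forall i : 'I_n, probability (Xi T i) R).
Hypotheses (kn : (k <= n)%N) (mu_consistent : consistent k mu).
Implicit Types (a b c : {set 'I_n}) (P : forall i, set (Xi T i)).

(* The mass of Pr_a^-1 (box a P) under mu~_b, for any b with b :&: a = c. *)
Definition tilde_mass a P c : R :=
  fine (mu a (box a (fam_on c P))) * \prod_(i in ~: c) fine (nu i (fam_on a P i)).

Lemma tilde_mass_self a P : tilde_mass a P a = fine (mu a (box a P)).
Proof.
rewrite /tilde_mass box_fam_on big1 ?mulr1 // => i; rewrite inE => /fam_on_out ->.
by rewrite probability_setT.
Qed.

Lemma tilde_measure_preimage_box (m : probability (PX T (fullI n)) R) a b P :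
  #|a| = k -> (#|b| <= k)%N -> is_tilde_measure k mu nu b m ->
  (forall i, measurable (P i)) ->
  fine (m (@projX n T a @^-1` box a P)) = tilde_mass a P (b :&: a).
Proof.
move=> ak bk mb mP.
have [g gk bg] : exists2 g : {set 'I_n}, #|g| = k & b \subset g.
  by apply: exists_superset_card; rewrite bk card_ord kn.
rewrite /projX preimage_restr_box (mb g gk bg _ (fam_on_measurable a mP)).
rewrite /tilde_mass; congr (fine _ * _).
  have -> : [set y | forall i (h : i \in g), i \in b -> fam_on a P i (y i h)] =
      box g (fam_on (b :&: a) P) by rewrite -fam_onI.
  have mB := box_measurable (g :&: a) (fam_on_measurable b mP).
  have := mu_consistent g a gk ak _ mB.
  rewrite !preimage_restr_box !fam_onI.
  rewrite (@eq_box_fam_on _ _ g _ (b :&: a)) => [|i gi]; last by rewrite !inE gi andbC.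
  rewrite (@eq_box_fam_on _ _ a _ (b :&: a)) => [->//|i ai].
  rewrite !inE ai !andbT andbC; apply/andP/idP => [[]//|ib].
  by rewrite (fintype.subsetP bg i ib).
rewrite [LHS]big_mkcond [RHS]big_mkcond; apply: eq_bigr => i _; rewrite !inE.
have [ia|ia] := boolP (i \in a); first by rewrite andbT.
by rewrite fam_on_out // probability_setT /= !if_same.
Qed.

Lemma tilde_combination_preimage_box
    (mt : {set 'I_n} -> probability (PX T (fullI n)) R) (l : nat -> R) a P :
  #|a| = k -> (forall b, (#|b| <= k)%N -> is_tilde_measure k mu nu b (mt b)) ->
  (forall i, measurable (P i)) ->
  (forall j, (j <= k)%N ->
     \sum_(j <= t < k.+1) l t * 'C(#|~: a|, t - j)%:R = (j == k)%:R) ->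
  \sum_(t < k.+1) l t *
      \sum_(b : {set 'I_n} | #|b| == t) fine (mt b (@projX n T a @^-1` box a P))
    = fine (mu a (box a P)).
Proof.
move=> ak mtb mP hl.
rewrite -tilde_mass_self -(trace_sum_inversion _ _ _ (tilde_mass a P) ak hl).
apply: eq_bigr => t _; congr (_ * _); apply: eq_bigr => b /eqP bt.
have bk : (#|b| <= k)%N by rewrite bt -ltnS.
exact: tilde_measure_preimage_box ak bk (mtb b bk) mP.
Qed.

End TildeMeasures.

Theorem mainTheorem1 (R : realType) (n k : nat) :
  (1 <= k)%N -> (k < n)%N ->
  exists lam : 'I_k.+1 -> R,
  forall (T : 'I_n -> ptopologicalType), (forall i, polish R (T i)) ->
  forall mu : forall a : {set 'I_n}, probability (PX T a) R,
  consistent k mu ->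
  forall nu : forall i : 'I_n, probability (Xi T i) R,
  forall mt : {set 'I_n} -> probability (PX T (fullI n)) R,
  (forall b : {set 'I_n}, (#|b| <= k)%N -> is_tilde_measure k mu nu b (mt b)) ->
  forall a : {set 'I_n}, #|a| = k ->
  forall B : set (PX T a), measurable B ->
    \sum_(t < k.+1) lam t *
      \sum_(b : {set 'I_n} | #|b| == t) fine (mt b (@projX n T a @^-1` B))
    = fine (mu a B).
Proof.
move=> _ kn.
have diag j : 'C(n - k, j - j)%:R = 1 :> R by rewrite subnn bin0.
have [l hl] := unitriangular_system_solvable k (fun t j => 'C(n - k, t - j)%:R)
  (fun j => (j == k)%:R) diag.
exists (fun t => l t) => T _ mu mu_consistent nu mt mtb a ak B mB.
have cardCa : #|~: a| = (n - k)%N by have := cardsC a; rewrite card_ord; lia.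
pose L S := \sum_(t < k.+1) l t *
  \sum_(b : {set 'I_n} | #|b| == t) fine (mt b (@projX n T a @^-1` S)).
apply: (real_sigma_additive_unique _ L (fine \o mu a) (measurable_boxes a)
  (boxes_setI_closed a) (boxes_setT a) _ _ _ _ mB).
- apply: real_sigma_additive_sum => t _; apply: real_sigma_additive_scale.
  apply: real_sigma_additive_sum => b _.
  apply: (real_sigma_additive_preimage (@projX n T a) (fine \o mt b)).
    exact: measurable_restr.
  exact: fine_measure_sigma_additive.
- exact: fine_measure_sigma_additive.
- move=> _ [P mP <-].
  apply: (tilde_combination_preimage_box mu nu (ltnW kn) mu_consistent) => // j jk.
  by rewrite cardCa; exact: hl.
Qed.
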